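(* Let $p$ be a probability distribution on $[d]$, fix $S\subseteq[d]$ with $|S| = s$, and suppose $m$ independent samples from $p$ are drawn; let $N_i$ be the number of samples equal to $i$. Let $q$ be the estimator with $q_i = (N_i+1)/(m+s)$ for $i\in S$ (the add-one estimator on $S$) and empirical (count-based) estimates on the remaining elements, so that $q$ is a probability distribution. Then $$\mathbb{E}\bigl[\chi^2(p[S]\|q[S])\bigr] \le \frac{s}{m+s} + \Bigl(\frac{(s-1)^2}{(m+1)(m+s)} - \frac{1}{m+s}\Bigr)\|p[S]\|_1 \le s/m + (s/m)^2 \le 2s/m,$$ the last inequality assuming $m\ge s$; in the case $S=[d]$ the first upper bound equals $\frac{d-1}{m+1}\le d/m$. Moreover, assuming $m\ge s$, and writing $m_\delta = m/(c\ln(1/\delta))$ for a sufficiently large universal constant $c$, if $p_i\ge 1/m_{\delta/s}$ for all $i\in S$, then except with probability at most $\delta$, $q_i$ is within a factor $4$ of $p_i$ (i.e. $p_i/4\le q_i\le 4p_i$) simultaneously for all $i\in S$.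
   Context: For a vector $p\in\mathbb{R}^d$ and $S\subseteq[d]$, $p[S]$ is the subvector indexed by $S$. For nonnegative vectors (not necessarily summing to $1$), $\chi^2(a\|b) = \sum_i (a_i - b_i)^2/b_i$. *)

From HB Require Import structures.
From mathcomp Require Import all_boot all_order all_algebra.
From mathcomp Require Import reals exp.
Set Implicit Arguments. Unset Strict Implicit. Unset Printing Implicit Defensive.
Import Order.TTheory GRing.Theory Num.Theory.
Local Open Scope ring_scope.

Section Defs.
Context {R : realType}.

Definition is_dist (d : nat) (p : 'I_d -> R) : Prop :=
  (forall i, 0 <= p i) /\ \sum_(i < d) p i = 1.

(* An outcome of m i.i.d. samples from p: a function 'I_m -> 'I_d,
   with probability \prod_j p (x j). *)
Definition sample_prob (d m : nat) (p : 'I_d -> R) (x : {ffun 'I_m -> 'I_d}) : R :=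
  \prod_(j < m) p (x j).

Definition Exp (d m : nat) (p : 'I_d -> R) (f : {ffun 'I_m -> 'I_d} -> R) : R :=
  \sum_(x : {ffun 'I_m -> 'I_d}) sample_prob p x * f x.

Definition Pr (d m : nat) (p : 'I_d -> R) (E : pred {ffun 'I_m -> 'I_d}) : R :=
  \sum_(x : {ffun 'I_m -> 'I_d} | E x) sample_prob p x.

Definition cnt (d m : nat) (x : {ffun 'I_m -> 'I_d}) (i : 'I_d) : nat :=
  #|[set j : 'I_m | x j == i]|.

(* Add-one estimator on S, empirical (count-based, normalized by m+s so that
   q is a probability distribution) outside S. *)
Definition addone_est (d m : nat) (S : {set 'I_d}) (x : {ffun 'I_m -> 'I_d})
  (i : 'I_d) : R :=
  if i \in S then ((cnt x i).+1)%:R / (m + #|S|)%:R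
  else (cnt x i)%:R / (m + #|S|)%:R.

Definition chi2_on (d : nat) (S : {set 'I_d}) (a b : 'I_d -> R) : R :=
  \sum_(i in S) (a i - b i) ^+ 2 / b i.

Definition l1_on (d : nat) (S : {set 'I_d}) (a : 'I_d -> R) : R :=
  \sum_(i in S) `|a i|.

Definition m_delta (c : R) (m : nat) (delta : R) : R :=
  m%:R / (c * ln (1 / delta)).

End Defs.

From mathcomp Require Import all_boot all_order all_algebra.
From mathcomp Require Import reals sequences exp.
From mathcomp Require Import ring lra.
Import Order.TTheory GRing.Theory Num.Theory.
Local Open Scope ring_scope.
Set Implicit Arguments. Unset Strict Implicit. Unset Printing Implicit Defensive.

(* For i in S the count N_i is binomial (m, p_i), and every expectation needed is
   that of a function of a single N_i, computed by conditioning on the first sample.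
   With Q = m + s, the chi^2 term of i is p_i^2 Q E[1/(N_i+1)] - 2 p_i + E[N_i+1]/Q,
   and (m+1) p_i E[1/(N_i+1)] is the probability that m+1 samples hit i, at most 1.
   Summing over S gives the first bound; the others follow by writing it as the
   convex combination of s/(m+s) and (s-1)/(m+1) with weight ||p[S]||_1.
   For the factor-4 guarantee, q_i is off only if N_i <= m p_i/2 or N_i + 1 >= 4 m p_i.
   Dominating both indicators by exponentials and using E[t^N_i] <= exp(m p_i (t-1))
   at t = 1/e and t = e bounds this probability by 5 exp(-(1/2 - 1/e) m p_i), which
   is at most delta/s when c (1/2 - 1/e) >= 4; a union bound over S concludes. *)

Section Sampling.
Variables (R : realType) (d : nat) (p : 'I_d -> R).

Definition ffun_cons m (a : 'I_d) (y : {ffun 'I_m -> 'I_d}) : {ffun 'I_m.+1 -> 'I_d} :=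
  [ffun j => if unlift ord0 j is Some k then y k else a].

Lemma sum_ffun_cons m (F : {ffun 'I_m.+1 -> 'I_d} -> R) :
  \sum_x F x = \sum_(a : 'I_d) \sum_(y : {ffun 'I_m -> 'I_d}) F (ffun_cons a y).
Proof.
rewrite pair_bigA /= (reindex (fun u => ffun_cons u.1 u.2)) //=.
exists (fun x : {ffun 'I_m.+1 -> 'I_d} => (x ord0, [ffun k => x (lift ord0 k)])).
- move=> [a y] _; rewrite /ffun_cons ffunE unlift_none; congr (_, _).
  by apply/ffunP => k; rewrite !ffunE liftK.
- move=> x _; apply/ffunP => j; rewrite ffunE.
  by case: unliftP => [k ->|->]; rewrite ?ffunE.
Qed.

Lemma sample_prob_cons m a (y : {ffun 'I_m -> 'I_d}) :
  sample_prob p (ffun_cons a y) = p a * sample_prob p y.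
Proof.
rewrite /sample_prob big_ord_recl ffunE unlift_none; congr (_ * _).
by apply: eq_bigr => k _; rewrite ffunE liftK.
Qed.

Lemma cntE m (x : {ffun 'I_m -> 'I_d}) i : cnt x i = (\sum_(j < m) (x j == i))%N.
Proof. by rewrite /cnt -sum1dep_card big_mkcond. Qed.

Lemma cnt_cons m a (y : {ffun 'I_m -> 'I_d}) i :
  cnt (ffun_cons a y) i = ((a == i) + cnt y i)%N.
Proof.
rewrite !cntE big_ord_recl ffunE unlift_none; congr (_ + _)%N.
by apply: eq_bigr => k _; rewrite ffunE liftK.
Qed.

Lemma eq_Exp m (f g : {ffun 'I_m -> 'I_d} -> R) : f =1 g -> Exp p f = Exp p g.
Proof. by move=> fg; apply: eq_bigr => x _; rewrite fg. Qed.

Lemma ExpD m (f g : {ffun 'I_m -> 'I_d} -> R) :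
  Exp p (fun x => f x + g x) = Exp p f + Exp p g.
Proof. by rewrite /Exp -big_split; apply: eq_bigr => x _; rewrite mulrDr. Qed.

Lemma ExpZ m c (f : {ffun 'I_m -> 'I_d} -> R) : Exp p (fun x => c * f x) = c * Exp p f.
Proof. by rewrite /Exp big_distrr; apply: eq_bigr => x _; rewrite mulrCA. Qed.

Lemma Exp_sum m (I : finType) (A : {pred I}) (F : I -> {ffun 'I_m -> 'I_d} -> R) :
  Exp p (fun x => \sum_(j in A) F j x) = \sum_(j in A) Exp p (F j).
Proof. by rewrite /Exp exchange_big; apply: eq_bigr => x _; rewrite big_distrr. Qed.

Lemma Exp_indicator m (E : pred {ffun 'I_m -> 'I_d}) : Exp p (fun x => (E x)%:R) = Pr p E.
Proof.
by rewrite /Pr /Exp [RHS]big_mkcond; apply: eq_bigr => x _; case: (E x); rewrite ?mulr1 ?mulr0.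
Qed.

Hypothesis p_ge0 : forall a, 0 <= p a.

Lemma sample_prob_ge0 m (x : {ffun 'I_m -> 'I_d}) : 0 <= sample_prob p x.
Proof. exact: prodr_ge0. Qed.

Lemma ler_Exp m (f g : {ffun 'I_m -> 'I_d} -> R) : (forall x, f x <= g x) -> Exp p f <= Exp p g.
Proof. by move=> fg; apply: ler_sum => x _; rewrite ler_wpM2l ?sample_prob_ge0. Qed.

Lemma Pr_le_Exp m (E : pred {ffun 'I_m -> 'I_d}) (f : {ffun 'I_m -> 'I_d} -> R) :
  (forall x, 0 <= f x) -> (forall x, E x -> 1 <= f x) -> Pr p E <= Exp p f.
Proof.
move=> f_ge0 f_ge1; rewrite -Exp_indicator; apply: ler_Exp => x.
by case: (boolP (E x)) => [/f_ge1|_].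
Qed.

Lemma Pr_exists_le m (I : finType) (A : {pred I}) (E : I -> pred {ffun 'I_m -> 'I_d}) :
  Pr p (fun x => [exists j in A, E j x]) <= \sum_(j in A) Pr p (E j).
Proof.
under eq_bigr do rewrite -Exp_indicator.
rewrite -Exp_sum; apply: Pr_le_Exp => [x|x /existsP[j /andP[jA Ejx]]].
  by apply: sumr_ge0 => j _; rewrite ler0n.
by rewrite (bigD1 j) //= Ejx lerDl; apply: sumr_ge0 => k _; rewrite ler0n.
Qed.

Hypothesis p_sum1 : \sum_a p a = 1.

Lemma sum_sample_prob m : \sum_(x : {ffun 'I_m -> 'I_d}) sample_prob p x = 1.
Proof.
by rewrite -(bigA_distr_bigA (fun (_ : 'I_m) a => p a)) /= p_sum1 prodr_const expr1n.
Qed.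

Lemma Exp_cst m c : Exp p (fun _ : {ffun 'I_m -> 'I_d} => c) = c.
Proof. by rewrite /Exp -big_distrl /= sum_sample_prob mul1r. Qed.

Section Count.
Variable i : 'I_d.

Definition Exp_cnt m (f : nat -> R) : R :=
  Exp p (fun x : {ffun 'I_m -> 'I_d} => f (cnt x i)).

Lemma eq_Exp_cnt m f g : f =1 g -> Exp_cnt m f = Exp_cnt m g.
Proof. by move=> fg; apply: eq_Exp => x; rewrite fg. Qed.

Lemma Exp_cntD m f g : Exp_cnt m (fun k => f k + g k) = Exp_cnt m f + Exp_cnt m g.
Proof. exact: ExpD. Qed.

Lemma Exp_cntZ m c f : Exp_cnt m (fun k => c * f k) = c * Exp_cnt m f.
Proof. exact: ExpZ. Qed.

Lemma Exp_cnt_cst m c : Exp_cnt m (fun=> c) = c.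
Proof. exact: Exp_cst. Qed.

Lemma ler_Exp_cnt m f g : (forall k, f k <= g k) -> Exp_cnt m f <= Exp_cnt m g.
Proof. by move=> fg; apply: ler_Exp. Qed.

Lemma Exp_cnt0 f : Exp_cnt 0 f = f 0%N.
Proof. by rewrite -(Exp_cst 0 (f 0%N)); apply: eq_Exp => x; rewrite cntE big_ord0. Qed.

Lemma Exp_cntS m f :
  Exp_cnt m.+1 f = p i * Exp_cnt m (fun k => f k.+1) + (1 - p i) * Exp_cnt m f.
Proof.
have -> : 1 - p i = \sum_(a | a != i) p a by rewrite -p_sum1 (bigD1 i) //= addrC addrK.
rewrite /Exp_cnt /Exp sum_ffun_cons (bigD1 i) //= big_distrr big_distrl /=.
congr (_ + _); first by apply: eq_bigr => y _; rewrite sample_prob_cons cnt_cons eqxx mulrA.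
apply: eq_bigr => a ai; rewrite big_distrr /=; apply: eq_bigr => y _.
by rewrite sample_prob_cons cnt_cons (negbTE ai) mulrA.
Qed.

Lemma Exp_cnt_expr m t : Exp_cnt m (fun k => t ^+ k) = (1 - p i + p i * t) ^+ m.
Proof.
elim: m => [|m IH]; first by rewrite Exp_cnt0.
rewrite Exp_cntS (eq_Exp_cnt _ (g := fun k => t * t ^+ k)) => [|k]; last by rewrite exprS.
by rewrite Exp_cntZ IH exprS; ring.
Qed.

Lemma Exp_cnt_nat m : Exp_cnt m (fun k => k%:R) = m%:R * p i.
Proof.
elim: m => [|m IH]; first by rewrite Exp_cnt0 mul0r.
rewrite Exp_cntS (eq_Exp_cnt _ (g := fun k => k%:R + 1)) => [|k]; last by rewrite -natr1.
by rewrite Exp_cntD Exp_cnt_cst IH -natr1; ring.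
Qed.

Lemma Exp_cnt_mul_cnt m f :
  Exp_cnt m.+1 (fun k => k%:R * f k) = m.+1%:R * p i * Exp_cnt m (fun k => f k.+1).
Proof.
elim: m f => [|m IH] f; first by rewrite Exp_cntS !Exp_cnt0; ring.
rewrite Exp_cntS (eq_Exp_cnt _ (g := fun k => k%:R * f k.+1 + f k.+1)) => [|k]; last first.
  by rewrite -natr1 mulrDl mul1r.
by rewrite Exp_cntD !IH (Exp_cntS m (fun k => f k.+1)) -!natr1; ring.
Qed.

(* [(m+1) p E_m[1/(N+1)] = E_(m+1)[N/N] = Pr_(m+1)[N > 0]]. *)
Lemma Exp_cnt_inv_succ m : p i * Exp_cnt m (fun k => k.+1%:R^-1) <= m.+1%:R^-1.
Proof.
have m1_gt0 : 0 < m.+1%:R :> R by rewrite ltr0n.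
rewrite -(ler_pM2l m1_gt0) mulrA mulfV ?gt_eqF //.
rewrite -(Exp_cnt_mul_cnt m (fun k => k%:R^-1)).
rewrite -[X in _ <= X](Exp_cnt_cst m.+1 1).
by apply: ler_Exp_cnt => -[|k]; rewrite ?mulr0n ?mul0r // mulfV ?pnatr_eq0.
Qed.

Lemma Exp_cnt_expr_le m t :
  0 <= t -> Exp_cnt m (fun k => t ^+ k) <= expR (m%:R * p i * (t - 1)).
Proof.
move=> t_ge0; have p_le1 : p i <= 1 by rewrite -p_sum1 (bigD1 i) //= lerDl sumr_ge0.
have p_i_ge0 := p_ge0 i.
rewrite Exp_cnt_expr (_ : _ * (t - 1) = p i * (t - 1) * m%:R) ?expRM_natr; last by ring.
apply: lerXn2r; rewrite ?nnegrE ?expR_ge0 //; first by nra.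
by have := expR_ge1Dx (p i * (t - 1)); lra.
Qed.

(* The term equals [p^2 Q/(N+1) - 2 p + (N+1)/Q]. *)
Lemma Exp_chi2_addone_term_le m (Q : R) : 0 < Q ->
  Exp p (fun x : {ffun 'I_m -> 'I_d} =>
           (p i - (cnt x i).+1%:R / Q) ^+ 2 / ((cnt x i).+1%:R / Q))
  <= p i * Q / m.+1%:R - 2 * p i + (m%:R * p i + 1) / Q.
Proof.
move=> Q_gt0.
have -> : Exp p (fun x : {ffun 'I_m -> 'I_d} =>
                   (p i - (cnt x i).+1%:R / Q) ^+ 2 / ((cnt x i).+1%:R / Q))
    = Exp_cnt m (fun k => p i * Q * (p i * k.+1%:R^-1) + (Q^-1 * k%:R + (Q^-1 - 2 * p i))).
  apply: eq_Exp => x; rewrite -natr1; field.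
  by rewrite natr1 pnatr_eq0 gt_eqF.
rewrite Exp_cntD Exp_cntZ Exp_cntD Exp_cntZ Exp_cntZ Exp_cnt_nat Exp_cnt_cst.
have -> : p i * Q / m.+1%:R - 2 * p i + (m%:R * p i + 1) / Q
          = p i * Q * m.+1%:R^-1 + (Q^-1 * (m%:R * p i) + (Q^-1 - 2 * p i)).
  by field; rewrite gt_eqF //= addrC natr1 pnatr_eq0.
by rewrite lerD2r ler_wpM2l ?Exp_cnt_inv_succ // mulr_ge0 // ltW.
Qed.

End Count.

Lemma Exp_chi2_addone_le (S : {set 'I_d}) m :
  Exp p (fun x : {ffun 'I_m -> 'I_d} => chi2_on S p (addone_est S x))
  <= ((m%:R + #|S|%:R) / (m%:R + 1) - 2 + m%:R / (m%:R + #|S|%:R)) * l1_on S p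
     + #|S|%:R / (m%:R + #|S|%:R).
Proof.
set Q := m%:R + #|S|%:R.
rewrite /chi2_on Exp_sum /l1_on big_distrr [#|S|%:R / Q]mulrC mulr_natr -sumr_const -big_split /=.
apply: ler_sum => i iS; rewrite ger0_norm // /addone_est iS natrD -/Q.
have Q_gt0 : 0 < Q.
  by rewrite /Q -natrD ltr0n addn_gt0; apply/orP; right; apply/card_gt0P; exists i.
suff -> : (Q / (m%:R + 1) - 2 + m%:R / Q) * p i + Q^-1
          = p i * Q / m.+1%:R - 2 * p i + (m%:R * p i + 1) / Q.
  exact: Exp_chi2_addone_term_le.
by field; rewrite gt_eqF //= addrC natr1 pnatr_eq0.
Qed.

End Sampling.

Lemma l1_on_ge0 (R : realType) d (S : {set 'I_d}) (a : 'I_d -> R) : 0 <= l1_on S a.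
Proof. exact: sumr_ge0. Qed.

Section L1Dist.
Variables (R : realType) (d : nat) (p : 'I_d -> R).
Hypotheses (p_ge0 : forall a, 0 <= p a) (p_sum1 : \sum_a p a = 1).

Lemma l1_onE S : l1_on S p = \sum_(i in S) p i.
Proof. by apply: eq_bigr => i _; rewrite ger0_norm. Qed.

Lemma l1_on_le1 S : l1_on S p <= 1.
Proof.
rewrite l1_onE -p_sum1 [X in _ <= X](bigID (mem S)) /= lerDl.
exact: sumr_ge0.
Qed.

Lemma l1_on_setT : l1_on setT p = 1.
Proof. by rewrite l1_onE -p_sum1; apply: eq_bigl => i; rewrite in_setT. Qed.

End L1Dist.

Definition addone_bound (R : realFieldType) (m s P : R) : R :=
  s / (m + s) + ((s - 1) ^+ 2 / ((m + 1) * (m + s)) - 1 / (m + s)) * P.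

Lemma addone_boundE (R : realFieldType) (m s P : R) : 0 < m -> 0 <= s ->
  addone_bound m s P = ((m + s) / (m + 1) - 2 + m / (m + s)) * P + s / (m + s).
Proof. by move=> m_gt0 s_ge0; rewrite /addone_bound; field; rewrite !gt_eqF ?ltr_wpDr. Qed.

Lemma addone_bound_convex (R : realFieldType) (m s P : R) : 0 < m -> 0 <= s ->
  addone_bound m s P = (1 - P) * (s / (m + s)) + P * ((s - 1) / (m + 1)).
Proof. by move=> m_gt0 s_ge0; rewrite /addone_bound; field; rewrite !gt_eqF ?ltr_wpDr. Qed.

Lemma addone_bound1 (R : realFieldType) (m s : R) : 0 < m -> 0 <= s ->
  addone_bound m s 1 = (s - 1) / (m + 1).
Proof. by move=> m_gt0 s_ge0; rewrite addone_bound_convex // subrr mul0r add0r mul1r. Qed.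

Lemma ler_pred_div_succ (R : realFieldType) (m s : R) : 0 < m -> 0 <= s ->
  (s - 1) / (m + 1) <= s / m.
Proof. by move=> m_gt0 s_ge0; rewrite ler_pdivrMr ?ltr_wpDr // mulrAC ler_pdivlMr //; nra. Qed.

Lemma addone_bound_le (R : realFieldType) (m s P : R) : 0 < m -> 0 <= s -> 0 <= P <= 1 ->
  addone_bound m s P <= s / m.
Proof.
move=> m_gt0 s_ge0 /andP[P_ge0 P_le1].
have : s / (m + s) <= s / m by rewrite ler_pdivrMr ?ltr_wpDr // mulrAC ler_pdivlMr //; nra.
have := ler_pred_div_succ m_gt0 s_ge0.
by rewrite addone_bound_convex //; nra.
Qed.

Lemma expR1_gt2 (R : realType) : 2 < expR (1 : R).
Proof. by have := @expR_gt1Dx R 1 (oner_neq0 _); lra. Qed.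

(* [1 - 1/2 <= expR (-1/2)] gives [expR (1/2) <= 2]; square it. *)
Lemma expR1_le4 (R : realType) : expR (1 : R) <= 4.
Proof.
have e_gt0 : 0 < expR (1 / 2 : R) := expR_gt0 _.
have : 1 - 1 / 2 <= (expR (1 / 2 : R))^-1 by rewrite -expRN expR_ge1Dx.
rewrite -(ler_pM2r e_gt0) mulVf ?gt_eqF // => e_le.
by rewrite [1 : R](splitr 1) expRD; nra.
Qed.

Definition chernoff_rate (R : realType) : R := 1 / 2 - expR (-1).

Lemma chernoff_rate_gt0 (R : realType) : 0 < chernoff_rate R.
Proof.
rewrite /chernoff_rate expRN div1r subr_gt0 ltf_pV2 ?posrE ?expR_gt0 //.
by have := expR1_gt2 R; lra.
Qed.

Definition tail_weight (R : realType) (mu N : R) : R :=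
  expR (mu / 2 - N) + expR (N + 1 - 4 * mu).

Lemma tail_weight_ge0 (R : realType) (mu N : R) : 0 <= tail_weight mu N.
Proof. by rewrite addr_ge0 ?expR_ge0. Qed.

Lemma tail_weight_ge1 (R : realType) (mu N : R) :
  ~ (mu / 2 < N /\ N + 1 < 4 * mu) -> 1 <= tail_weight mu N.
Proof.
move=> not_mid; have := expR_ge0 (mu / 2 - N); have := expR_ge0 (N + 1 - 4 * mu).
have := expR_ge1Dx (mu / 2 - N); have := expR_ge1Dx (N + 1 - 4 * mu).
rewrite /tail_weight; case: (ltP (mu / 2) N) => lo; case: (ltP (N + 1) (4 * mu)) => hi; lra.
Qed.

(* [5 r^4 <= r] for [r <= 1/2], and [expR (- 4 ln (1/r)) = r^4]. *)
Lemma expR_tail_le (R : realType) (k c mu r : R) :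
  0 < r -> r <= 1 / 2 -> 0 <= k -> 4 <= k * c -> c * ln (1 / r) <= mu ->
  5 * expR (- (k * mu)) <= r.
Proof.
move=> r_gt0 r_le k_ge0 kc_ge4 mu_ge; set L := ln (1 / r).
have L_ge0 : 0 <= L by rewrite ln_ge0 // ler_pdivlMr // mul1r; lra.
have eL : expR (- L) = r by rewrite /L div1r lnV ?posrE // opprK lnK ?posrE.
apply: le_trans (_ : 5 * expR (4%:R * - L) <= _).
  rewrite ler_wpM2l // ler_expR.
  have : 0 <= k * (mu - c * L) by rewrite mulr_ge0 // subr_ge0.
  have : 0 <= (k * c - 4) * L by rewrite mulr_ge0 // subr_ge0.
  lra.
have r3 : r ^+ 3 <= (1 / 2) ^+ 3 by apply: lerXn2r; rewrite ?nnegrE; lra.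
rewrite expRM_natl eL exprSr; move: r3; rewrite !exprS expr0; nra.
Qed.

Definition within4 (R : realFieldType) (a b : R) : bool := (a / 4 <= b) && (b <= 4 * a).

Section Concentration.
Variables (R : realType) (d : nat) (p : 'I_d -> R).
Hypotheses (p_ge0 : forall a, 0 <= p a) (p_sum1 : \sum_a p a = 1).

(* Chernoff: the moment generating function at [t = 1/e] and [t = e]. *)
Lemma Exp_tail_weight_le i m :
  Exp_cnt p i m (fun k => tail_weight (m%:R * p i) k%:R)
  <= 5 * expR (- (chernoff_rate R * (m%:R * p i))).
Proof.
set mu := m%:R * p i; set k := chernoff_rate R.
have mu_ge0 : 0 <= mu by rewrite mulr_ge0.
have k_le : k <= 1 / 2 by rewrite /k /chernoff_rate gerBl expR_ge0.
rewrite (eq_Exp_cnt _ _ _ (g := fun n => expR (mu / 2) * expR (-1) ^+ n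
                                         + expR (1 - 4 * mu) * expR 1 ^+ n)) => [|n]; last first.
  by rewrite /tail_weight -!expRM_natr -!expRD; congr (expR _ + expR _); ring.
rewrite Exp_cntD !Exp_cntZ.
have lower : expR (mu / 2) * Exp_cnt p i m (fun n => expR (-1) ^+ n) <= expR (- (k * mu)).
  apply: le_trans (ler_wpM2l (expR_ge0 _) (Exp_cnt_expr_le p_ge0 p_sum1 i m (expR_ge0 (-1)))) _.
  by rewrite -expRD ler_expR -/mu /k /chernoff_rate; lra.
have upper : expR (1 - 4 * mu) * Exp_cnt p i m (fun n => expR 1 ^+ n) <= 4 * expR (- (k * mu)).
  apply: le_trans (ler_wpM2l (expR_ge0 _) (Exp_cnt_expr_le p_ge0 p_sum1 i m (expR_ge0 1))) _.
  apply: le_trans (_ : expR (1 + - (k * mu)) <= _).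
    by rewrite -expRD ler_expR -/mu; have := expR1_le4 R; nra.
  by rewrite expRD ler_wpM2r ?expR_ge0 ?expR1_le4.
lra.
Qed.

Lemma addone_est_within4 (S : {set 'I_d}) m (x : {ffun 'I_m -> 'I_d}) i :
  i \in S -> (#|S| <= m)%N ->
  m%:R * p i / 2 < (cnt x i)%:R -> (cnt x i)%:R + 1 < 4 * (m%:R * p i) ->
  within4 (p i) (addone_est S x i).
Proof.
move=> iS S_le_m lo hi; rewrite /within4 /addone_est iS natrD -[(cnt x i).+1%:R]natr1.
have p_i_ge0 := p_ge0 i.
have s_ge1 : 1 <= #|S|%:R :> R by rewrite ler1n; apply/card_gt0P; exists i.
have s_le_m : #|S|%:R <= m%:R :> R by rewrite ler_nat.
have ms_gt0 : 0 < m%:R + #|S|%:R :> R by lra.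
have slack : 0 <= p i * (m%:R - #|S|%:R) by rewrite mulr_ge0 // subr_ge0.
have ps_ge0 : 0 <= p i * #|S|%:R by rewrite mulr_ge0.
by rewrite ler_pdivlMr // ler_pdivrMr //; apply/andP; split; nra.
Qed.

Lemma Pr_addone_far_le (S : {set 'I_d}) m i : i \in S -> (#|S| <= m)%N ->
  Pr p (fun x : {ffun 'I_m -> 'I_d} => ~~ within4 (p i) (addone_est S x i))
  <= 5 * expR (- (chernoff_rate R * (m%:R * p i))).
Proof.
move=> iS S_le_m; apply: le_trans (Exp_tail_weight_le i m).
apply: Pr_le_Exp => // [x|x /negP far]; first exact: tail_weight_ge0.
by apply: tail_weight_ge1 => -[lo hi]; apply: far; apply: addone_est_within4.
Qed.

End Concentration.

Lemma addone_within4_whp (R : realType) (c : R) d (p : 'I_d -> R) (S : {set 'I_d}) m delta :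
  4 / chernoff_rate R <= c -> is_dist p -> (#|S| <= m)%N -> 0 < delta -> delta <= 1 / 2 ->
  (forall i, i \in S -> 1 / m_delta c m (delta / #|S|%:R) <= p i) ->
  Pr p (fun x : {ffun 'I_m -> 'I_d} => [exists i in S, ~~ within4 (p i) (addone_est S x i)])
  <= delta.
Proof.
move=> c_ge [p_ge0 p_sum1] S_le_m delta_gt0 delta_le p_ge.
have k_gt0 := chernoff_rate_gt0 R.
have kc_ge4 : 4 <= chernoff_rate R * c by rewrite -ler_pdivrMl // mulrC.
apply: le_trans (Pr_exists_le p_ge0 _ _) _.
apply: le_trans (_ : \sum_(i in S) (delta / #|S|%:R) <= _); last first.
  rewrite sumr_const; have [->|S_gt0] := posnP #|S|; first by rewrite mulr0n ltW.
  by rewrite -[leLHS]mulr_natr divfK ?pnatr_eq0 -?lt0n.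
apply: ler_sum => i iS; apply: le_trans (Pr_addone_far_le p_ge0 p_sum1 iS S_le_m) _.
have s_ge1 : 1 <= #|S|%:R :> R by rewrite ler1n; apply/card_gt0P; exists i.
have m_gt0 : 0 < m%:R :> R by rewrite ltr0n; apply: leq_trans S_le_m; apply/card_gt0P; exists i.
apply: (expR_tail_le _ _ (ltW k_gt0) kc_ge4).
- by rewrite divr_gt0 // (lt_le_trans ltr01).
- by rewrite ler_pdivrMr ?(lt_le_trans ltr01) //; nra.
- have := p_ge i iS; rewrite /m_delta div1r invf_div ler_pdivrMr //.
  by rewrite [p i * _]mulrC.
Qed.

Theorem proposition2p16 (R : realType) :
  (forall (d : nat) (p : 'I_d -> R) (S : {set 'I_d}) (m : nat),
     is_dist p -> (0 < m)%N ->
     let s : R := #|S|%:R in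
     let bound : R :=
       s / (m%:R + s)
       + ((s - 1) ^+ 2 / ((m%:R + 1) * (m%:R + s)) - 1 / (m%:R + s)) * l1_on S p in
     [/\ Exp p (fun x : {ffun 'I_m -> 'I_d} => chi2_on S p (addone_est S x)) <= bound,
         bound <= s / m%:R + (s / m%:R) ^+ 2,
         ((#|S| <= m)%N -> s / m%:R + (s / m%:R) ^+ 2 <= 2 * s / m%:R)
       & (S = setT -> bound = (d%:R - 1) / (m%:R + 1)
                      /\ (d%:R - 1) / (m%:R + 1) <= d%:R / m%:R :> R)])
  /\
  (exists c0 : R, 0 < c0 /\
     forall c : R, c0 <= c ->
     forall (d : nat) (p : 'I_d -> R) (S : {set 'I_d}) (m : nat) (delta : R),
       is_dist p -> (#|S| <= m)%N -> 0 < delta -> delta <= 1 / 2 ->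
       (forall i, i \in S -> 1 / m_delta c m (delta / #|S|%:R) <= p i) ->
       Pr p (fun x : {ffun 'I_m -> 'I_d} =>
               [exists i in S, ~~ ((p i / 4 <= addone_est S x i)
                                   && (addone_est S x i <= 4 * p i))])
       <= delta).
Proof.
split; last first.
  exists (4 / chernoff_rate R); split; first by rewrite divr_gt0 ?chernoff_rate_gt0.
  by move=> c c_ge d p S m delta; apply: addone_within4_whp.
move=> d p S m [p_ge0 p_sum1] m_gt0 s bound.
have m_gt0' : 0 < m%:R :> R by rewrite ltr0n.
have s_ge0 : 0 <= s by rewrite ler0n.
have bound_le : bound <= s / m%:R.
  by apply: addone_bound_le; rewrite // l1_on_ge0 l1_on_le1.
split.
- have -> : bound = ((m%:R + s) / (m%:R + 1) - 2 + m%:R / (m%:R + s)) * l1_on S p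
                    + s / (m%:R + s) by apply: addone_boundE.
  exact: Exp_chi2_addone_le.
- by apply: le_trans bound_le _; rewrite lerDl sqr_ge0.
- move=> S_le_m.
  have ratio_le1 : s / m%:R <= 1 by rewrite ler_pdivrMr // mul1r ler_nat.
  have ratio_ge0 : 0 <= s / m%:R by rewrite divr_ge0 // ltW.
  by rewrite -mulrA; nra.
- move=> ST; subst S.
  have sd : s = d%:R by rewrite /s cardsT card_ord.
  have -> : bound = (s - 1) / (m%:R + 1) by rewrite /bound l1_on_setT //; apply: addone_bound1.
  by rewrite -sd; split => //; apply: ler_pred_div_succ.
Qed.
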